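(* Let $\varepsilon<\varepsilon_0=1/21$ and let $B\subset\mathbb{Z}^2$ be an $\varepsilon$-rare random set. Then almost surely $\mathbb{Z}^2\setminus B$ has a unique infinite $\square$-connected component $I$, and every $\boxtimes$-connected component of $\mathbb{Z}^2\setminus I$ is finite.
   Context: $\square$-adjacency on $\mathbb{Z}^2$: $\|u-v\|_1=1$; $\boxtimes$-adjacency: $\|u-v\|_\infty=1$. A random set $B\subset\mathbb{Z}^2$ (defined on a probability space with measure $\mathbb{P}$) is $\varepsilon$-rare ($\varepsilon\ge0$) if $\mathbb{P}(A\subset B)\le\varepsilon^{\#A}$ for every finite $A\subset\mathbb{Z}^2$. *)

From HB Require Import structures.
From mathcomp Require Import all_boot all_order all_algebra.
From mathcomp Require Import all_classical all_reals all_analysis.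
From mathcomp Require Import finmap.
Set Implicit Arguments. Unset Strict Implicit. Unset Printing Implicit Defensive.
Import Order.TTheory GRing.Theory Num.Theory.

Definition Z2 : Type := (int * int)%type.

Local Open Scope ring_scope.

Definition adj_sq (u v : Z2) : bool :=
  (`|u.1 - v.1| + `|u.2 - v.2| == 1 :> int).

Definition adj_king (u v : Z2) : bool :=
  (Num.max `|u.1 - v.1| `|u.2 - v.2| == 1 :> int).

Local Open Scope classical_set_scope.

Definition connected_in (adj : rel Z2) (S : set Z2) (x y : Z2) : Prop :=
  exists p : seq Z2,
    [/\ path adj x p, last x p = y & forall z, z \in x :: p -> S z].

Definition component (adj : rel Z2) (S : set Z2) (C : set Z2) : Prop :=
  exists x, S x /\ C = [set y | connected_in adj S x y].

Definition rare (R : realType) (d : measure_display) (T : measurableType d)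
  (P : probability T R) (B : T -> set Z2) (eps : R) : Prop :=
  0 <= eps /\
  forall A : {fset Z2},
    (P [set w | forall a, a \in A -> B w a] <= (eps ^+ #|` A|)%:E)%E.

From HB Require Import structures.
From mathcomp Require Import all_boot all_order all_algebra.
From mathcomp Require Import all_classical all_reals all_analysis.
From mathcomp Require Import finmap.
From mathcomp Require Import zify lra.
Set Implicit Arguments. Unset Strict Implicit. Unset Printing Implicit Defensive.
Import Order.TTheory GRing.Theory Num.Theory.
Local Open Scope classical_set_scope.
Local Open Scope ring_scope.

(* Call the sites of [B w] closed.  A self-avoiding closed king path with 2N
   sites starting in the box of radius 5N has probability at most eps^(2N), and
   there are at most (10N + 1)^2 8^(2N - 1) such paths; since 256 eps^2 < 1 these
   bounds are summable, so by Borel-Cantelli, almost surely, from some scale M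
   on there is no such path.  Then an exploration of the interface between open
   and closed sites cannot cross a rectangle of width 2N - 1 and height 10N in
   that box along closed sites, so it crosses it along open sites.  A square
   crossing and a transverse king crossing of a rectangle always meet, by a
   parity argument; hence the open crossings of the four side bands of the
   boxes at all scales N >= M belong to a single open cluster I, which is
   unbounded.  Every king path from the box of radius N to the outside of the
   box of radius 3N meets one of these crossings, so every other open cluster,
   and every king component of the complement of I, is bounded. *)

Lemma adj_sq_sym : symmetric adj_sq.
Proof. by move=> [a b] [c d]; rewrite /adj_sq /=; apply/idP/idP; lia. Qed.

Lemma adj_king_sym : symmetric adj_king.
Proof. by move=> [a b] [c d]; rewrite /adj_king /=; apply/idP/idP; lia. Qed.

Lemma adj_sq_king u v : adj_sq u v -> adj_king u v.
Proof. by case: u v => [a b] [c d]; rewrite /adj_sq /adj_king /=; lia. Qed.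

Lemma adj_sq_dist2 u v : adj_sq u v -> `|u.2 - v.2| <= 1.
Proof. by case: u v => [a b] [c d]; rewrite /adj_sq /=; lia. Qed.

Lemma adj_king_dist1 u v : adj_king u v -> `|u.1 - v.1| <= 1.
Proof. by case: u v => [a b] [c d]; rewrite /adj_king /=; lia. Qed.

Lemma adj_king_dist2 u v : adj_king u v -> `|u.2 - v.2| <= 1.
Proof. by case: u v => [a b] [c d]; rewrite /adj_king /=; lia. Qed.

Definition swapZ2 (c : Z2) : Z2 := (c.2, c.1).

Lemma swapZ2K : involutive swapZ2. Proof. by case. Qed.

Lemma adj_sq_swap u v : adj_sq (swapZ2 u) (swapZ2 v) = adj_sq u v.
Proof. by case: u v => [a b] [c d]; rewrite /adj_sq /=; apply/idP/idP; lia. Qed.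

Lemma adj_king_swap u v : adj_king (swapZ2 u) (swapZ2 v) = adj_king u v.
Proof. by case: u v => [a b] [c d]; rewrite /adj_king /=; apply/idP/idP; lia. Qed.

Lemma mem_map_swapZ2 (c : Z2) s : (c \in map swapZ2 s) = (swapZ2 c \in s).
Proof. by rewrite -{1}[c]swapZ2K (mem_map (can_inj swapZ2K)). Qed.

Lemma path_swapZ2 (e : rel Z2) x p :
  (forall u v, e (swapZ2 u) (swapZ2 v) = e u v) ->
  path e (swapZ2 x) (map swapZ2 p) = path e x p.
Proof. by move=> He; rewrite path_map; apply: eq_path. Qed.

Section Walks.
Variable T : eqType.
Implicit Types (e : rel T) (x : T) (p : seq T).

Lemma last_rev_belast x p : last (last x p) (rev (belast x p)) = x.
Proof. by elim: p x => [|y p IH] x //=; rewrite rev_cons -cats1 last_cat. Qed.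

Lemma mem_rev_belast x p : last x p :: rev (belast x p) =i x :: p.
Proof. by move=> z; rewrite -rev_rcons -lastI mem_rev. Qed.

Lemma path_rev_sym e x p : symmetric e ->
  path e x p -> path e (last x p) (rev (belast x p)).
Proof. by move=> es; rewrite rev_path; apply: sub_path => a b; rewrite es. Qed.

Lemma path_first_entry e (Q : pred T) x p : Q (last x p) ->
  exists q, [/\ path e x p -> path e x q, Q (last x q),
     {subset x :: q <= x :: p} & {in belast x q, forall c : T, ~~ Q c}].
Proof.
elim: p x => [|y p IH] x /= HQ; first by exists [::]; split.
have [Qx|nQx] := boolP (Q x).
  by exists [::]; split => // c; rewrite inE => /eqP ->; rewrite mem_head.
have [q [Hp HQq Hs Hb]] := IH y HQ.
exists (y :: q); split => //=.
- by move=> /andP[-> /Hp].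
- move=> c; rewrite inE => /predU1P[->|/Hs]; first by rewrite !inE eqxx ?orbT.
  by move=> Hc; rewrite inE Hc orbT.
- by move=> c; rewrite inE => /predU1P[->|/Hb].
Qed.

Lemma path_last_exit e (Q : pred T) x p : Q x ->
  exists x' q, [/\ path e x p -> path e x' q, last x' q = last x p, Q x',
     {subset x' :: q <= x :: p} & {in q, forall c : T, ~~ Q c}].
Proof.
elim/last_ind: p => [|p y IH] Qx; first by exists x, [::]; split.
have [x' [q [Hp Hl HQ Hs Hn]]] := IH Qx.
have mem_rcons_cons c : c \in x :: p -> c \in x :: rcons p y.
  by move=> Hc; rewrite -rcons_cons mem_rcons inE Hc orbT.
have [Qy|nQy] := boolP (Q y).
  exists y, [::]; split; rewrite ?last_rcons //.
  by move=> c; rewrite inE => /eqP ->; rewrite -rcons_cons mem_rcons mem_head.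
exists x', (rcons q y); split; rewrite ?last_rcons //.
- by rewrite !rcons_path => /andP[/Hp -> /=]; rewrite Hl.
- move=> c; rewrite -rcons_cons mem_rcons inE => /predU1P[->|/Hs/mem_rcons_cons //].
  by rewrite -rcons_cons mem_rcons mem_head.
- by move=> c; rewrite mem_rcons inE => /predU1P[->|/Hn].
Qed.

Lemma path_trim_band e (h : T -> int) (lo hi : int) x p :
  (forall u v, e u v -> `|h u - h v| <= 1) -> lo <= hi ->
  path e x p -> h x < lo -> hi < h (last x p) ->
  exists x' q, [/\ path e x' q, h x' = lo, h (last x' q) = hi,
     {subset x' :: q <= x :: p} & {in x' :: q, forall c : T, lo <= h c <= hi}].
Proof.
move=> Lh lohi Hp hx hl.
have [q [/(_ Hp) Hq hiq subq below]] :=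
  path_first_entry e (Q := fun c => hi <= h c) (ltW hl).
have below' c : c \in x :: q -> h c <= hi.
  rewrite lastI mem_rcons inE => /predU1P[->|/below]; last by lia.
  case/lastP: q Hq hiq below {subq} => [|q' y] /=; first by lia.
  rewrite rcons_path last_rcons belast_rcons => /andP[_ /Lh] + _ /(_ _ (mem_last _ _)).
  by lia.
have [x' [q2 [/(_ Hq) Hq2 lq2 lox' subq2 above]]] :=
  path_last_exit e (Q := fun c => h c <= lo) q (ltW hx).
have hx' : h x' = lo.
  case: q2 Hq2 lq2 above lox' {subq2} => [|y q2] /=; first by move=> _ -> _; lia.
  by move=> /andP[/Lh + _] _ /(_ y (mem_head _ _)); lia.
exists x', q2; split => //.
- by rewrite lq2; apply/eqP; rewrite eq_le below' ?mem_last.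
- by move=> c /subq2/subq.
- move=> c c_in; have := below' c (subq2 c c_in).
  by move: c_in; rewrite inE => /predU1P[->|/above]; lia.
Qed.

End Walks.

Section Connected.
Variables (e : rel Z2) (S : set Z2).

Lemma connected_in_refl x : S x -> connected_in e S x x.
Proof. by move=> Sx; exists [::]; split => // c; rewrite inE => /eqP ->. Qed.

Lemma connected_in_trans x y z :
  connected_in e S x y -> connected_in e S y z -> connected_in e S x z.
Proof.
move=> [p [Hp <- Sp]] [q [Hq <- Sq]]; exists (p ++ q); split.
- by rewrite cat_path Hp Hq.
- by rewrite last_cat.
- move=> c; rewrite -cat_cons mem_cat => /orP[/Sp //|Hc].
  by apply: Sq; rewrite inE Hc orbT.
Qed.

Lemma connected_in_sym x y : symmetric e ->
  connected_in e S x y -> connected_in e S y x.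
Proof.
move=> es [p [Hp <- Sp]]; exists (rev (belast x p)); split.
- exact: path_rev_sym.
- exact: last_rev_belast.
- by move=> c Hc; apply: Sp; rewrite -mem_rev_belast.
Qed.

Lemma connected_in_adj x y : S x -> S y -> e x y -> connected_in e S x y.
Proof.
by move=> Sx Sy exy; exists [:: y]; split; rewrite /= ?exy // => c; rewrite !inE => /orP[] /eqP ->.
Qed.

Lemma connected_in_path x p c : path e x p -> {in x :: p, forall d : Z2, S d} ->
  c \in x :: p -> connected_in e S x c.
Proof.
elim: p x => [|y p IH] x Hp Sp.
  by rewrite inE => /eqP ->; apply/connected_in_refl/Sp/mem_head.
rewrite inE => /predU1P[->|Hc]; first exact/connected_in_refl/Sp/mem_head.
move: Hp => /= /andP[Hxy Hp].
apply: connected_in_trans (IH y Hp _ Hc); last first.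
  by move=> d Hd; apply: Sp; rewrite inE Hd orbT.
by apply: connected_in_adj Hxy; apply: Sp; rewrite !inE eqxx ?orbT.
Qed.

Lemma connected_in_path2 x p c d : symmetric e -> path e x p ->
  {in x :: p, forall d : Z2, S d} -> c \in x :: p -> d \in x :: p -> connected_in e S c d.
Proof.
move=> es Hp Sp Hc Hd.
exact: connected_in_trans (connected_in_sym es (connected_in_path Hp Sp Hc))
                          (connected_in_path Hp Sp Hd).
Qed.

End Connected.

(** * Crossing paths meet *)

(* [ray_cross x y a b]: the king step from [a] to [b] crosses the vertical ray
   {x + 1/2} * (y, +oo).  For a site [c], the parity of the number of crossings
   of the ray just right of [c] by a king path [g] does not change along square
   paths avoiding [g] ([ray_parity_path]); below [g] it tells whether the ends
   of [g] lie on the same side of the ray, above [g] it is even. *)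
Definition ray_cross (x y : int) (a b : Z2) : bool :=
  ((a.1 == x) && (b.1 == x + 1) || (a.1 == x + 1) && (b.1 == x)) &&
  (y < Num.max a.2 b.2).

Fixpoint ray_crossings (x y : int) (a : Z2) (p : seq Z2) : nat :=
  if p is b :: p' then ray_cross x y a b + ray_crossings x y b p' else 0%N.

Definition ray_parity (g : Z2) (gs : seq Z2) (c : Z2) : bool :=
  odd (ray_crossings c.1 c.2 g gs).

Lemma odd_ray_crossings_below x y a p : path adj_king a p ->
  {in a :: p, forall c : Z2, y < c.2} ->
  odd (ray_crossings x y a p) = (a.1 <= x) (+) ((last a p).1 <= x).
Proof.
elim: p a => [|b p IH] a /=; first by case: (a.1 <= x).
move=> /andP[Hab Hp] Hy.
rewrite oddD IH //; last by move=> c Hc; apply: Hy; rewrite inE Hc orbT.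
have -> : ray_cross x y a b = (a.1 <= x) (+) (b.1 <= x).
  have := Hy a (mem_head _ _); move: Hab.
  by case: a b {Hy Hp} => [a1 a2] [b1 b2]; rewrite /adj_king /ray_cross /=; lia.
by case: (a.1 <= x) (b.1 <= x) ((last b p).1 <= x) => [] [] [].
Qed.

Lemma ray_crossings_above x y a p : {in a :: p, forall c : Z2, c.2 <= y} ->
  ray_crossings x y a p = 0%N.
Proof.
elim: p a => [|b p IH] a //= Hy.
rewrite IH; last by move=> c Hc; apply: Hy; rewrite inE Hc orbT.
have Ha := Hy a (mem_head _ _); have Hb : b.2 <= y by apply: Hy; rewrite !inE eqxx orbT.
rewrite /ray_cross; case: a b Ha Hb {Hy} => [a1 a2] [b1 b2] /= Ha Hb.
have -> : (y < Num.max a2 b2) = false by lia.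
by rewrite andbF.
Qed.

Lemma ray_crossings_up x y a p : path adj_king a p ->
  (x, y) \notin a :: p -> (x, y + 1) \notin a :: p ->
  ray_crossings x y a p = ray_crossings x (y + 1) a p.
Proof.
elim: p a => [|b p IH] a //= /andP[Hab Hp].
rewrite !inE !negb_or => /and3P[Ha1 Hb1 Hp1] /and3P[Ha2 Hb2 Hp2].
rewrite IH ?inE ?negb_or ?Hb1 ?Hb2 //.
suff -> : ray_cross x y a b = ray_cross x (y + 1) a b by [].
move: Hab Ha1 Hb1 Ha2 Hb2; case: a b {Hp IH Hp1 Hp2} => [a1 a2] [b1 b2].
by rewrite /adj_king /ray_cross !xpair_eqE /=; lia.
Qed.

Definition above_in_column (x y : int) (c : Z2) : bool := (c.1 == x + 1) && (y < c.2).

Lemma ray_crossings_right x y a p : path adj_king a p -> (x + 1, y) \notin a :: p ->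
  odd (ray_crossings x y a p) (+) odd (ray_crossings (x + 1) y a p) =
  above_in_column x y a (+) above_in_column x y (last a p).
Proof.
elim: p a => [|b p IH] a /=; first by case: (above_in_column x y a).
move=> /andP[Hab Hp]; rewrite inE negb_or => /andP[Ha Hbp].
have Hb : b != (x + 1, y) by move: Hbp; rewrite inE negb_or eq_sym => /andP[].
have step : ray_cross x y a b (+) ray_cross (x + 1) y a b =
            above_in_column x y a (+) above_in_column x y b.
  move: Hab Ha Hb; rewrite eq_sym; case: a b {Hp IH Hbp} => [a1 a2] [b1 b2].
  rewrite /adj_king /ray_cross /above_in_column !xpair_eqE /= => Hab Ha Hb.
  have maxE (u v : int) : (y < Num.max u v) = (y < u) || (y < v) by lia.
  rewrite !maxE.
  case: (a1 =P x) => ?; case: (a1 =P x + 1) => ?; case: (a1 =P x + 1 + 1) => ?;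
  case: (b1 =P x) => ?; case: (b1 =P x + 1) => ?; case: (b1 =P x + 1 + 1) => ?;
  case: (y < a2) / boolP => ?; case: (y < b2) / boolP => ? //=; lia.
rewrite !oddD !oddb; move: step (IH b Hp Hbp).
by case: (ray_cross x y a b) (ray_cross (x + 1) y a b) (odd (ray_crossings x y b p))
  (odd (ray_crossings (x + 1) y b p)) (above_in_column x y a)
  (above_in_column x y b) (above_in_column x y (last b p)) => [] [] [] [] [] [] [].
Qed.

Section RayParity.
Variables (x0 x1 : int) (g : Z2) (gs : seq Z2).
Hypotheses (Hg : path adj_king g gs) (g0 : g.1 < x0) (g1 : x1 < (last g gs).1).

Lemma ray_parity_adj_sq q r : adj_sq q r -> x0 <= q.1 <= x1 -> x0 <= r.1 <= x1 ->
  q \notin g :: gs -> r \notin g :: gs -> ray_parity g gs q = ray_parity g gs r.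
Proof.
case: q r => [q1 q2] [r1 r2]; rewrite /adj_sq /ray_parity /= => Hqr Hq Hr Nq Nr.
have [E|E] : q1 = r1 \/ q2 = r2 by lia.
  subst r1; have [E|E] : r2 = q2 + 1 \/ q2 = r2 + 1 by lia.
    by subst r2; rewrite (ray_crossings_up Hg Nq Nr).
  by subst q2; rewrite (ray_crossings_up Hg Nr Nq).
subst r2.
have no_col (u : int) : x0 <= u + 1 <= x1 ->
    above_in_column u q2 g = false /\ above_in_column u q2 (last g gs) = false.
  by rewrite /above_in_column; split; lia.
have [E|E] : r1 = q1 + 1 \/ q1 = r1 + 1 by lia.
  subst r1; have [n1 n2] := no_col q1 ltac:(lia).
  have := ray_crossings_right (y := q2) Hg Nr; rewrite n1 n2.
  by case: (odd _); case: (odd _).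
subst q1; have [n1 n2] := no_col r1 ltac:(lia).
have := ray_crossings_right (y := q2) Hg Nq; rewrite n1 n2.
by case: (odd _); case: (odd _).
Qed.

Lemma ray_parity_path p ps : path adj_sq p ps ->
  {in p :: ps, forall c : Z2, x0 <= c.1 <= x1} -> {in p :: ps, forall c : Z2, c \notin g :: gs} ->
  ray_parity g gs p = ray_parity g gs (last p ps).
Proof.
elim: ps p => [|r ps IH] p //= /andP[Hpr Hp] Hx Hn.
rewrite (ray_parity_adj_sq Hpr) ?Hx ?Hn ?inE ?eqxx ?orbT //.
by apply: IH => // c Hc; [apply: Hx | apply: Hn]; rewrite inE Hc orbT.
Qed.

End RayParity.

Definition spans (h : Z2 -> int) (lo hi : int) (a : Z2) (p : seq Z2) : Prop :=
  h a < lo /\ hi < h (last a p) \/ hi < h a /\ h (last a p) < lo.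

Lemma king_sq_paths_meet_oriented x0 x1 y0 y1 g gs p ps :
  path adj_king g gs -> {in g :: gs, forall c : Z2, y0 <= c.2 <= y1} ->
  g.1 < x0 -> x1 < (last g gs).1 ->
  path adj_sq p ps -> {in p :: ps, forall c : Z2, x0 <= c.1 <= x1} ->
  p.2 < y0 -> y1 < (last p ps).2 ->
  exists2 c, c \in g :: gs & c \in p :: ps.
Proof.
move=> Hg Hgy g0 g1 Hp Hpx p0 p1.
have [/hasP[c Hc Hcg]|/hasPn Hn] := boolP (has (mem (g :: gs)) (p :: ps)).
  by exists c.
have := ray_parity_path Hg g0 g1 Hp Hpx Hn.
rewrite /ray_parity odd_ray_crossings_below //; last first.
  by move=> c /Hgy; lia.
rewrite ray_crossings_above; last by move=> c /Hgy; lia.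
have Hx := Hpx p (mem_head _ _).
have -> : (g.1 <= p.1) = true by lia.
by have -> : ((last g gs).1 <= p.1) = false by lia.
Qed.

Lemma king_sq_paths_meet x0 x1 y0 y1 g gs p ps :
  path adj_king g gs -> {in g :: gs, forall c : Z2, y0 <= c.2 <= y1} -> spans fst x0 x1 g gs ->
  path adj_sq p ps -> {in p :: ps, forall c : Z2, x0 <= c.1 <= x1} -> spans snd y0 y1 p ps ->
  exists2 c, c \in g :: gs & c \in p :: ps.
Proof.
have in_rev a s (P : Z2 -> Prop) : {in a :: s, forall c : Z2, P c} ->
    {in last a s :: rev (belast a s), forall c : Z2, P c}.
  by move=> Ps c; rewrite mem_rev_belast; apply: Ps.
have meet_p a s : path adj_king a s -> {in a :: s, forall c : Z2, y0 <= c.2 <= y1} ->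
    a.1 < x0 -> x1 < (last a s).1 ->
    path adj_sq p ps -> {in p :: ps, forall c : Z2, x0 <= c.1 <= x1} -> spans snd y0 y1 p ps ->
    exists2 c, c \in a :: s & c \in p :: ps.
  move=> Hg Hgy g0 g1 Hp Hpx [[p0 p1]|[p1 p0]].
    exact: king_sq_paths_meet_oriented Hp Hpx p0 p1.
  have [|c Hcg] := king_sq_paths_meet_oriented Hg Hgy g0 g1
    (path_rev_sym adj_sq_sym Hp) (in_rev _ _ _ Hpx) p0; first by rewrite last_rev_belast.
  by rewrite mem_rev_belast; exists c.
move=> Hg Hgy [[g0 g1]|[g1 g0]]; first exact: meet_p.
move=> Hp Hpx Hps.
have [|c Hcg Hcp] := meet_p _ _ (path_rev_sym adj_king_sym Hg) (in_rev _ _ _ Hgy) g0 _ Hp Hpx Hps.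
  by rewrite last_rev_belast.
by exists c; rewrite // -mem_rev_belast.
Qed.

Lemma king_sq_paths_meetT x0 x1 y0 y1 g gs p ps :
  path adj_king g gs -> {in g :: gs, forall c : Z2, x0 <= c.1 <= x1} -> spans snd y0 y1 g gs ->
  path adj_sq p ps -> {in p :: ps, forall c : Z2, y0 <= c.2 <= y1} -> spans fst x0 x1 p ps ->
  exists2 c, c \in g :: gs & c \in p :: ps.
Proof.
move=> Hg Hgx Hgs Hp Hpy Hps.
have swap_in s (P : Z2 -> Prop) : {in s, forall c : Z2, P c} ->
    {in map swapZ2 s, forall c : Z2, P (swapZ2 c)}.
  by move=> Ps c; rewrite mem_map_swapZ2; apply: Ps.
have [||||||c Hcg Hcp] := @king_sq_paths_meet y0 y1 x0 x1 (swapZ2 g) (map swapZ2 gs)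
  (swapZ2 p) (map swapZ2 ps).
- by rewrite path_swapZ2 //; apply: adj_king_swap.
- exact: swap_in Hgx.
- by move: Hgs; rewrite /spans last_map.
- by rewrite path_swapZ2 //; apply: adj_sq_swap.
- exact: swap_in Hpy.
- by move: Hps; rewrite /spans last_map.
by exists (swapZ2 c); rewrite -mem_map_swapZ2.
Qed.

(** * Exploration of the interface between open and closed sites *)

Definition addZ2 (u v : Z2) : Z2 := (u.1 + v.1, u.2 + v.2).
Definition subZ2 (u v : Z2) : Z2 := (u.1 - v.1, u.2 - v.2).

Definition front (l r : Z2) : Z2 := (r.2 - l.2, l.1 - r.1).

Section HexExploration.
Variable col : Z2 -> bool.

(* Like the exploration path of site percolation on the hexagonal
   lattice, a step looks at the two sites in front of the pair and replaces one
   of them; the open sites met form a square path, the closed ones a king path,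
   and the step can be undone ([hex_backK]), so the exploration never cycles. *)
Definition hex_valid (s : Z2 * Z2) := [&& ~~ col s.1, col s.2 & adj_sq s.1 s.2].

Definition hex_step (s : Z2 * Z2) : Z2 * Z2 :=
  let: (l, r) := s in let la := addZ2 l (front l r) in let ra := addZ2 r (front l r) in
  if col la then (l, la) else if ~~ col ra then (ra, r) else (la, ra).

Definition hex_back (s : Z2 * Z2) : Z2 * Z2 :=
  let: (l, r) := s in let lb := subZ2 l (front l r) in let rb := subZ2 r (front l r) in
  if col lb then (l, lb) else if ~~ col rb then (rb, r) else (lb, rb).

Lemma hex_backK s : ~~ col s.1 -> col s.2 -> hex_back (hex_step s) = s.
Proof.
case: s => l r /= Hl Hr.
set la := addZ2 l (front l r); set ra := addZ2 r (front l r).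
have Z2E (u v : Z2) : u.1 = v.1 -> u.2 = v.2 -> u = v by case: u v => ? ? [? ?] /= -> ->.
have [back_la back_r] : subZ2 l (front l la) = r /\ front la ra = front l r.
  by rewrite /la /ra /front /subZ2 /addZ2; split; apply: Z2E => /=; lia.
have [back_ra back_l] : subZ2 ra (front ra r) = la /\ subZ2 r (front ra r) = l.
  by rewrite /la /ra /front /subZ2 /addZ2; split; apply: Z2E => /=; lia.
have back_f u v : subZ2 (addZ2 u v) v = u by apply: Z2E => /=; lia.
rewrite /hex_step -/la -/ra /hex_back.
case: ifP => Hla; first by rewrite back_la Hr.
case: ifP => Hra; first by rewrite back_ra back_l Hla Hl.
by rewrite back_r !back_f (negbTE Hl) Hr.
Qed.

Lemma hex_step_inj s t : hex_valid s -> hex_valid t -> hex_step s = hex_step t -> s = t.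
Proof.
move=> /and3P[Hs1 Hs2 _] /and3P[Ht1 Ht2 _] E.
by rewrite -(hex_backK Hs1 Hs2) E hex_backK.
Qed.

Lemma hex_step_valid s : hex_valid s -> hex_valid (hex_step s).
Proof.
case: s => [[a b] [c d]] /and3P[/= H1 H2]; rewrite /hex_step /hex_valid /front /addZ2 /adj_sq /=.
by case: ifP => /= Hla; [|case: ifP => /= Hra]; rewrite ?H1 ?H2 ?Hla ?Hra ?(negbFE Hra) /=; lia.
Qed.

Lemma hex_step_open (S : set Z2) s : hex_valid s ->
  (forall c, ~~ col c -> c \in [:: s.1; addZ2 s.1 (front s.1 s.2); addZ2 s.2 (front s.1 s.2)] -> S c) ->
  connected_in adj_sq S s.1 (hex_step s).1.
Proof.
case: s => l r /and3P[/= Hl _ Hlr] HS; rewrite /hex_step.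
have [l_la la_ra] : adj_sq l (addZ2 l (front l r)) /\
    adj_sq (addZ2 l (front l r)) (addZ2 r (front l r)).
  by move: Hlr; case: l r {HS Hl} => [a b] [c d]; rewrite /adj_sq /=; lia.
set la := addZ2 l (front l r) in l_la la_ra *; set ra := addZ2 r (front l r) in la_ra *.
have Sl : S l by apply: HS; rewrite ?inE ?eqxx.
case: ifP => Hla /=; first exact: connected_in_refl.
have Sla : S la by apply: HS; rewrite ?Hla ?inE ?eqxx ?orbT.
have l_to_la := connected_in_adj Sl Sla l_la.
case: ifP => Hra //=.
by apply: connected_in_trans l_to_la (connected_in_adj Sla _ la_ra); apply: HS; rewrite ?inE ?eqxx ?orbT.
Qed.

Lemma hex_step_closed (S : set Z2) s : hex_valid s ->
  (forall c, col c -> c \in [:: s.2; addZ2 s.1 (front s.1 s.2); addZ2 s.2 (front s.1 s.2)] -> S c) ->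
  connected_in adj_king S s.2 (hex_step s).2.
Proof.
case: s => l r /and3P[/= _ Hr Hlr] HS; rewrite /hex_step.
have [r_la r_ra] : adj_king r (addZ2 l (front l r)) /\ adj_king r (addZ2 r (front l r)).
  by move: Hlr; case: l r {HS Hr} => [a b] [c d]; rewrite /adj_sq /adj_king /=; lia.
set la := addZ2 l (front l r) in r_la *; set ra := addZ2 r (front l r) in r_ra *.
have Sr : S r by apply: HS; rewrite ?inE ?eqxx.
case: ifP => Hla /=.
  by apply: connected_in_adj Sr _ r_la; apply: HS; rewrite ?inE ?eqxx ?orbT.
case: ifP => Hra /=; first exact: connected_in_refl.
by apply: connected_in_adj Sr _ r_ra; apply: HS; rewrite ?(negbFE Hra) ?inE ?eqxx ?orbT.
Qed.

End HexExploration.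

Definition irange (a b : int) : seq int := [seq a + i%:Z | i <- iota 0 (absz (b - a + 1))].

Lemma mem_irange a b z : a <= z <= b -> z \in irange a b.
Proof. by move=> Hz; apply/mapP; exists (absz (z - a)); rewrite ?mem_iota; lia. Qed.

Lemma size_irange a b : size (irange a b) = absz (b - a + 1).
Proof. by rewrite size_map size_iota. Qed.

Section Rectangle.
Variables (x0 x1 y0 y1 : int) (A : set Z2).
Hypotheses (hx : x0 <= x1) (hy : y0 <= y1).

(* The exploration starts at the lower left corner of the rectangle
   [x0, x1] * [y0, y1], in a colouring where the columns on both sides of the
   strip [x0, x1] are closed and, inside the strip, the rows below and above
   the rectangle are open. *)
Definition rect_col (z : Z2) : bool :=
  if x0 <= z.1 <= x1 then (y0 <= z.2 <= y1) && `[< A z >] else true.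

Definition in_frame (z : Z2) : bool := (x0 - 1 <= z.1 <= x1 + 1) && (y0 - 1 <= z.2 <= y1 + 1).

Definition exited (s : Z2 * Z2) : bool := (y1 < s.1.2) || (x1 < s.2.1).

Lemma rect_open z : ~~ rect_col z -> x0 <= z.1 <= x1 /\ (y0 <= z.2 <= y1 -> ~ A z).
Proof.
rewrite /rect_col; case: ifP => // xz; rewrite negb_and => H; split => // yz.
by move: H; rewrite yz => /asboolPn.
Qed.

Lemma rect_closed z : rect_col z -> x0 <= z.1 <= x1 -> y0 <= z.2 <= y1 /\ A z.
Proof. by rewrite /rect_col => + xz; rewrite xz => /andP[-> /asboolP]. Qed.

Lemma hex_step_in_frame s : hex_valid rect_col s -> in_frame s.1 -> in_frame s.2 ->
  ~~ exited s -> in_frame (addZ2 s.1 (front s.1 s.2)) && in_frame (addZ2 s.2 (front s.1 s.2)).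
Proof.
case: s => l r /and3P[/= /rect_open[Hl _] Hr Hlr] fl fr Hs.
have Hr' : (r.1 < x0) || (x1 < r.1) || (y0 <= r.2 <= y1).
  by move: Hr; rewrite /rect_col; case: ifP => [_ /andP[-> _]|]; [rewrite orbT | lia].
move: Hlr fl fr Hs Hl Hr'; case: l r {Hr} => [a b] [c d].
by rewrite /adj_sq /in_frame /exited /front /addZ2 /=; lia.
Qed.

Definition start : Z2 * Z2 := ((x0, y0 - 1), (x0 - 1, y0 - 1)).
Definition prestart : Z2 * Z2 := ((x0, y0 - 2), (x0 - 1, y0 - 2)).

Lemma start_valid : hex_valid rect_col start.
Proof. by rewrite /hex_valid /rect_col /adj_sq /=; do !case: ifP => /=; lia. Qed.

Lemma prestart_valid : hex_valid rect_col prestart.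
Proof. by rewrite /hex_valid /rect_col /adj_sq /=; do !case: ifP => /=; lia. Qed.

Lemma hex_step_prestart : hex_step rect_col prestart = start.
Proof.
rewrite /hex_step /prestart /start /front /addZ2 /rect_col /=.
by do !case: ifP => /=; (lia || (move=> *; congr (_, _); congr (_, _); lia)).
Qed.

Definition explore (k : nat) : Z2 * Z2 := iter k (hex_step rect_col) start.

Lemma explore_inv k : (forall j, (j < k)%N -> ~~ exited (explore j)) ->
  [&& hex_valid rect_col (explore k), in_frame (explore k).1 & in_frame (explore k).2].
Proof.
elim: k => [|k IH] Hk; first by rewrite start_valid /in_frame /=; lia.
have /and3P[Hv H1 H2] := IH (fun j Hj => Hk j (ltnW Hj)).
rewrite /explore iterS -/(explore k) hex_step_valid //=.
have /andP[] := hex_step_in_frame Hv H1 H2 (Hk k (ltnSn k)).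
move: H1 H2; case: (explore k) => l r /= H1 H2 f1 f2.
by rewrite /hex_step; do !case: ifP => /=; rewrite ?f1 ?f2 ?H1 ?H2.
Qed.

Definition frame_cells : seq Z2 :=
  [seq (i, j) | i <- irange (x0 - 1) (x1 + 1), j <- irange (y0 - 1) (y1 + 1)].

Lemma in_frame_cells z : in_frame z -> z \in frame_cells.
Proof.
by case: z => i j /andP[Hi Hj]; apply: (allpairs_f (fun i j => (i, j))); exact: mem_irange.
Qed.

Lemma explore_shift i j : (i <= j)%N ->
  (forall k, (k <= j)%N -> hex_valid rect_col (explore k)) ->
  explore i = explore j -> explore 0 = explore (j - i).
Proof.
elim: i j => [|i IH] [|j] //= ij Hv E; rewrite ?subn0 // subSS.
apply: IH => [|k Hk|]; first exact: ij.
  exact: Hv (leqW Hk).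
exact: hex_step_inj (Hv i (leqW ij)) (Hv j (leqnSn j)) E.
Qed.

(* By injectivity a repeated state would lead back to [start], whose
   predecessor [prestart] lies outside the frame. *)
Lemma explore_neq i j : (i < j)%N ->
  (forall k, (k <= j)%N -> hex_valid rect_col (explore k) && in_frame (explore k).1) ->
  explore i != explore j.
Proof.
move=> ij inv; apply/eqP => E.
have E0 : explore 0 = explore (j - i).
  by apply: explore_shift (ltnW ij) _ E => k /inv /andP[].
have /andP[Hv Hf] := inv (j - i).-1 (leq_trans (leq_pred _) (leq_subr _ _)).
have : explore (j - i).-1.+1 = hex_step rect_col prestart.
  by rewrite prednK ?subn_gt0 // -E0 hex_step_prestart.
rewrite /explore iterS => /(hex_step_inj Hv prestart_valid) Ep.
by move: Hf; rewrite Ep /in_frame /=; lia.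
Qed.

Lemma explore_exits : exists k, exited (explore k) /\ forall j, (j < k)%N -> ~~ exited (explore j).
Proof.
set states := [seq (u, v) | u <- frame_cells, v <- frame_cells].
set K := size states.
have [/hasP[k _ Hk]|/hasPn stay] := boolP (has (exited \o explore) (iota 0 K.+1)).
  have [m Hm Hmin] := ex_minnP (ex_intro _ k Hk : exists k, exited (explore k)).
  by exists m; split => // j Hjm; apply/negP => /Hmin; rewrite leqNgt Hjm.
have inv j : (j <= K)%N ->
    [&& hex_valid rect_col (explore j), in_frame (explore j).1 & in_frame (explore j).2].
  move=> Hj; apply: explore_inv => i Hi; apply: stay.
  by rewrite mem_iota add0n ltnS (leq_trans (ltnW Hi)).
have Huniq : uniq [seq explore j | j <- iota 0 K.+1].
  rewrite map_inj_in_uniq ?iota_uniq // => i j; rewrite !mem_iota !add0n !ltnS => iK jK E.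
  have neq k l : (k < l <= K)%N -> explore k != explore l.
    case/andP=> kl lK; apply: explore_neq kl _ => m ml.
    by case/and3P: (inv m (leq_trans ml lK)) => -> ->.
  case: (ltngtP i j) => [lt|lt|//].
    by move: (neq i j); rewrite lt jK E eqxx => /(_ isT).
  by move: (neq j i); rewrite lt iK E eqxx => /(_ isT).
have Hsub : {subset [seq explore j | j <- iota 0 K.+1] <= states}.
  move=> s /mapP[j]; rewrite mem_iota add0n ltnS => /inv /and3P[_ H1 H2] ->.
  by case: (explore j) H1 H2 => u v H1 H2; apply: allpairs_f; apply: in_frame_cells.
by have := uniq_leq_size Huniq Hsub; rewrite size_map size_iota ltnn.
Qed.

Lemma explore_open k : (forall j, (j < k)%N -> ~~ exited (explore j)) ->
  connected_in adj_sq [set c | ~~ rect_col c /\ in_frame c] (explore 0).1 (explore k).1.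
Proof.
elim: k => [|k IH] Hk.
  by apply: connected_in_refl; have /and3P[/and3P[? _ _] ? _] := explore_inv Hk.
have Hk' j : (j < k)%N -> ~~ exited (explore j) by move=> Hj; apply/Hk/ltnW.
apply: connected_in_trans (IH Hk') _.
have /and3P[Hv H1 H2] := explore_inv Hk'.
have /andP[f1 f2] := hex_step_in_frame Hv H1 H2 (Hk k (ltnSn k)).
rewrite /explore iterS -/(explore k); apply: hex_step_open Hv _ => c Hc.
by rewrite !inE => Hc'; split => //; case/or3P: Hc' => /eqP ->.
Qed.

Lemma explore_closed k : (forall j, (j < k)%N -> ~~ exited (explore j)) ->
  connected_in adj_king [set c | rect_col c /\ in_frame c] (explore 0).2 (explore k).2.
Proof.
elim: k => [|k IH] Hk.
  by apply: connected_in_refl; have /and3P[/and3P[_ ? _] _ ?] := explore_inv Hk.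
have Hk' j : (j < k)%N -> ~~ exited (explore j) by move=> Hj; apply/Hk/ltnW.
apply: connected_in_trans (IH Hk') _.
have /and3P[Hv H1 H2] := explore_inv Hk'.
have /andP[f1 f2] := hex_step_in_frame Hv H1 H2 (Hk k (ltnSn k)).
rewrite /explore iterS -/(explore k); apply: hex_step_closed Hv _ => c Hc.
by rewrite !inE => Hc'; split => //; case/or3P: Hc' => /eqP ->.
Qed.

Lemma rect_crossing :
  (exists a p, [/\ path adj_sq a p, a.2 = y0, (last a p).2 = y1 &
     {in a :: p, forall c : Z2, [/\ x0 <= c.1 <= x1, y0 <= c.2 <= y1 & ~ A c]}]) \/
  (exists a p, [/\ path adj_king a p, a.1 = x0, (last a p).1 = x1 &
     {in a :: p, forall c : Z2, [/\ x0 <= c.1 <= x1, y0 <= c.2 <= y1 & A c]}]).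
Proof.
have [k [Hk before]] := explore_exits.
case/orP: Hk => Hk; [left | right].
- have [p [Hp Hl Hs]] := explore_open before.
  have [||a [q [Hq Ha Hlq sub rows]]] := path_trim_band (h := snd) adj_sq_dist2 hy Hp.
  + by rewrite /= /start /=; lia.
  + by rewrite Hl.
  exists a, q; split => // c Hc; have /rows cy := Hc.
  by have [/rect_open[cx cA] _] := Hs c (sub c Hc); split => //; apply: cA.
- have [p [Hp Hl Hs]] := explore_closed before.
  have [||a [q [Hq Ha Hlq sub cols]]] := path_trim_band (h := fst) adj_king_dist1 hx Hp.
  + by rewrite /= /start /=; lia.
  + by rewrite Hl.
  exists a, q; split => // c Hc; have /cols cx := Hc.
  by have [/rect_closed/(_ cx)[cy cA] _] := Hs c (sub c Hc).
Qed.

End Rectangle.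

Lemma rect_crossingT (A : set Z2) x0 x1 y0 y1 : x0 <= x1 -> y0 <= y1 ->
  (exists a p, [/\ path adj_sq a p, a.1 = x0, (last a p).1 = x1 &
     {in a :: p, forall c : Z2, [/\ x0 <= c.1 <= x1, y0 <= c.2 <= y1 & ~ A c]}]) \/
  (exists a p, [/\ path adj_king a p, a.2 = y0, (last a p).2 = y1 &
     {in a :: p, forall c : Z2, [/\ x0 <= c.1 <= x1, y0 <= c.2 <= y1 & A c]}]).
Proof.
move=> hx hy.
have swap_in a p (P : Z2 -> Prop) : {in a :: p, forall c : Z2, P (swapZ2 c)} ->
    {in swapZ2 a :: map swapZ2 p, forall c : Z2, P c}.
  by move=> Pp c; rewrite -map_cons mem_map_swapZ2 => /Pp; rewrite swapZ2K.
have [[a [p [Hp Ha Hl Hc]]]|[a [p [Hp Ha Hl Hc]]]] := rect_crossing (A \o swapZ2) hy hx.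
- left; exists (swapZ2 a), (map swapZ2 p); split; rewrite ?last_map //.
    by rewrite path_swapZ2 // => u v; rewrite adj_sq_swap.
  by apply: swap_in => -[c1 c2] /Hc [].
- right; exists (swapZ2 a), (map swapZ2 p); split; rewrite ?last_map //.
    by rewrite path_swapZ2 // => u v; rewrite adj_king_swap.
  by apply: swap_in => -[c1 c2] /Hc [].
Qed.

(** * The infinite open cluster *)

Definition inbox (K : int) (c : Z2) : bool := (`|c.1| <= K) && (`|c.2| <= K).

Definition box_cells (K : int) : seq Z2 :=
  [seq (i, j) | i <- irange (- K) K, j <- irange (- K) K].

Lemma box_cellsP K c : inbox K c -> c \in box_cells K.
Proof.
case: c => i j; rewrite /inbox /= => /andP[Hi Hj].
by apply: (allpairs_f (fun i j => (i, j))); apply: mem_irange; lia.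
Qed.

Lemma infinite_set_outside_box (S : set Z2) K : infinite_set S -> exists2 y, S y & ~~ inbox K y.
Proof.
move=> HS; apply: contrapT => Hn; apply/HS/(@finite_subfset _ [fset c in box_cells K]%fset).
move=> y Sy; rewrite /= inE; apply: box_cellsP.
by apply: contrapT => /negP Hy; apply: Hn; exists y.
Qed.

Lemma infinite_set_unbounded (S : set Z2) : (forall K, exists2 c, S c & K < c.1) -> infinite_set S.
Proof.
move=> HS /finite_fsetP[X SX].
have [c Sc] := HS (\sum_(d <- X) `|d.1|).
have c_in : c \in X by move: Sc; rewrite SX.
rewrite (bigD1_seq c) ?fset_uniq //= ltNge.
by rewrite (le_trans (ler_norm _)) // lerDl sumr_ge0.
Qed.

Lemma king_path_dist a p : path adj_king a p ->
  `|(last a p).1 - a.1| <= (size p)%:Z /\ `|(last a p).2 - a.2| <= (size p)%:Z.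
Proof.
elim: p a => [|b p IH] a /=; first by split; lia.
by move=> /andP[/[dup] /adj_king_dist1 H1 /adj_king_dist2 H2 /IH[]]; lia.
Qed.

Definition closed_paths_short (M : int) (A : set Z2) : Prop :=
  forall N : int, M <= N -> forall a p, path adj_king a p -> uniq (a :: p) ->
    {in a :: p, forall c : Z2, A c} -> `|a.1| <= 5 * N -> `|a.2| <= 5 * N ->
    (size p)%:Z + 1 < 2 * N.

Lemma inbox_le (K K' : int) c : K <= K' -> inbox K c -> inbox K' c.
Proof. by rewrite /inbox; lia. Qed.

Lemma king_path_exit_box (K : int) x p : path adj_king x p -> inbox K x ->
  ~~ inbox K (last x p) -> exists q, [/\ path adj_king x q, ~~ inbox K (last x q),
    {subset x :: q <= x :: p} & {in x :: q, forall c : Z2, inbox (K + 1) c}].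
Proof.
move=> Hp Hx Hl.
have [q [/(_ Hp) Hq Hlq sub inside]] := path_first_entry adj_king (Q := fun c => ~~ inbox K c) Hl.
exists q; split => // c; rewrite lastI mem_rcons inE => /predU1P[->|/inside]; last first.
  by rewrite /inbox negbK; lia.
case/lastP: q Hq inside {Hlq sub} => [|q' y] /=; first by move: Hx; rewrite /inbox; lia.
rewrite rcons_path last_rcons belast_rcons => /andP[_ Hy] /(_ _ (mem_last x q')).
by move: Hy; rewrite /inbox negbK; case: (last x q') y => [a b] [u v]; rewrite /adj_king /=; lia.
Qed.

Section Cluster.
Variables (A : set Z2) (M : int).
Hypotheses (hM : 2 <= M) (hA : closed_paths_short M A).

Lemma closed_king_path_short (N : int) a p : M <= N -> path adj_king a p ->
  {in a :: p, forall c : Z2, A c} -> `|a.1| <= 5 * N -> `|a.2| <= 5 * N ->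
  `|(last a p).1 - a.1| < 2 * N - 1 /\ `|(last a p).2 - a.2| < 2 * N - 1.
Proof.
move=> HN; case/shortenP => p' Hp' Hu sub_p' Ap a1 a2.
have Ap' : {in a :: p', forall c : Z2, A c}.
  by move=> c; rewrite inE => /predU1P[->|/sub_p' c_in]; apply: Ap; rewrite inE ?eqxx ?c_in ?orbT.
have := hA HN Hp' Hu Ap' a1 a2; have [] := king_path_dist Hp'.
by set b := last a p'; lia.
Qed.

Definition vcross (N a0 a1 : int) (a : Z2) (p : seq Z2) : Prop :=
  [/\ path adj_sq a p, a.2 = - (5 * N), (last a p).2 = 5 * N &
      {in a :: p, forall c : Z2, a0 <= c.1 <= a1 /\ ~ A c}].

Definition hcross (N b0 b1 : int) (a : Z2) (p : seq Z2) : Prop :=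
  [/\ path adj_sq a p, a.1 = - (5 * N), (last a p).1 = 5 * N &
      {in a :: p, forall c : Z2, b0 <= c.2 <= b1 /\ ~ A c}].

Lemma vcross_exists (N a0 a1 : int) : M <= N -> 2 * N - 1 <= a1 - a0 ->
  - (5 * N) <= a0 -> a1 <= 5 * N -> exists a p, vcross N a0 a1 a p.
Proof.
move=> HN wide lo hi.
have [[a [p [Hp a2 l2 Hc]]]|[a [p [Hp a1' l1 Hc]]]] :=
  rect_crossing A (x0 := a0) (x1 := a1) (y0 := - (5 * N)) (y1 := 5 * N) ltac:(lia) ltac:(lia).
  by exists a, p; split => // c /Hc[].
have Ap : {in a :: p, forall c : Z2, A c} by move=> c /Hc[].
have [ax ay _] := Hc a (mem_head _ _).
have [+ _] := closed_king_path_short HN Hp Ap ltac:(lia) ltac:(lia).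
by rewrite l1 a1'; lia.
Qed.

Lemma hcross_exists (N b0 b1 : int) : M <= N -> 2 * N - 1 <= b1 - b0 ->
  - (5 * N) <= b0 -> b1 <= 5 * N -> exists a p, hcross N b0 b1 a p.
Proof.
move=> HN wide lo hi.
have [[a [p [Hp a1 l1 Hc]]]|[a [p [Hp a2 l2 Hc]]]] :=
  rect_crossingT A (x0 := - (5 * N)) (x1 := 5 * N) (y0 := b0) (y1 := b1) ltac:(lia) ltac:(lia).
  by exists a, p; split => // c /Hc[].
have Ap : {in a :: p, forall c : Z2, A c} by move=> c /Hc[].
have [ax ay _] := Hc a (mem_head _ _).
have [_ +] := closed_king_path_short HN Hp Ap ltac:(lia) ltac:(lia).
by rewrite l2 a2; lia.
Qed.

Lemma king_meets_vcross (N a0 a1 : int) g gs v vs : path adj_king g gs ->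
  {in g :: gs, forall c : Z2, `|c.2| < 5 * N} -> spans fst a0 a1 g gs ->
  vcross N a0 a1 v vs -> exists2 c, c \in g :: gs & c \in v :: vs.
Proof.
move=> Hg Hgy Hgs [Hv v2 l2 Hvc].
apply: (king_sq_paths_meet (y0 := - (5 * N) + 1) (y1 := 5 * N - 1)) Hg _ Hgs Hv _ _.
- by move=> c /Hgy; lia.
- by move=> c /Hvc[].
- by left; rewrite v2 l2; lia.
Qed.

Lemma king_meets_hcross (N b0 b1 : int) g gs h hs : path adj_king g gs ->
  {in g :: gs, forall c : Z2, `|c.1| < 5 * N} -> spans snd b0 b1 g gs ->
  hcross N b0 b1 h hs -> exists2 c, c \in g :: gs & c \in h :: hs.
Proof.
move=> Hg Hgx Hgs [Hh h1 l1 Hhc].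
apply: (king_sq_paths_meetT (x0 := - (5 * N) + 1) (x1 := 5 * N - 1)) Hg _ Hgs Hh _ _.
- by move=> c /Hgx; lia.
- by move=> c /Hhc[].
- by left; rewrite h1 l1; lia.
Qed.

Lemma hcross_meets_vcross (N N' a0 a1 b0 b1 : int) h hs v vs :
  hcross N' b0 b1 h hs -> vcross N a0 a1 v vs ->
  - (5 * N') < a0 -> a1 < 5 * N' -> - (5 * N) < b0 -> b1 < 5 * N ->
  exists2 c, c \in h :: hs & c \in v :: vs.
Proof.
move=> [Hh h1 l1 Hhc] Hv ha0 ha1 hb0 hb1.
apply: king_meets_vcross (sub_path adj_sq_king Hh) _ _ Hv.
  by move=> c /Hhc[]; lia.
by left; rewrite h1 l1.
Qed.

Variables (v0 : Z2) (vs0 : seq Z2).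
Hypothesis anchor : vcross M (M + 1) (3 * M) v0 vs0.

Let reached (a : Z2) (p : seq Z2) := {in a :: p, forall c : Z2, connected_in adj_sq (~` A) v0 c}.

Lemma reached_anchor : reached v0 vs0.
Proof. by case: anchor => Hp _ _ Hc c; apply: connected_in_path Hp (fun d Hd => (Hc d Hd).2). Qed.

Lemma reached_meet a p b q : reached a p -> path adj_sq b q -> {in b :: q, forall c : Z2, ~ A c} ->
  (exists2 c, c \in a :: p & c \in b :: q) -> reached b q.
Proof.
move=> Ra Hq Oq [c Hca Hcb] d Hd.
exact: connected_in_trans (Ra c Hca) (connected_in_path2 adj_sq_sym Hq Oq Hcb Hd).
Qed.

Lemma reached_hcross (N N' a0 a1 b0 b1 : int) v vs h hs :
  vcross N a0 a1 v vs -> reached v vs -> hcross N' b0 b1 h hs ->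
  - (5 * N') < a0 -> a1 < 5 * N' -> - (5 * N) < b0 -> b1 < 5 * N -> reached h hs.
Proof.
move=> Hv Rv Hh ha0 ha1 hb0 hb1; case: (Hh) => Hp _ _ Hc.
apply: reached_meet Rv Hp (fun c Hc' => (Hc c Hc').2) _.
by have [c] := hcross_meets_vcross Hh Hv ha0 ha1 hb0 hb1; exists c.
Qed.

Lemma reached_vcross (N N' a0 a1 b0 b1 : int) h hs v vs :
  hcross N' b0 b1 h hs -> reached h hs -> vcross N a0 a1 v vs ->
  - (5 * N') < a0 -> a1 < 5 * N' -> - (5 * N) < b0 -> b1 < 5 * N -> reached v vs.
Proof.
move=> Hh Rh Hv ha0 ha1 hb0 hb1; case: (Hv) => Hp _ _ Hc.
apply: reached_meet Rh Hp (fun c Hc' => (Hc c Hc').2) _.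
exact: hcross_meets_vcross Hh Hv ha0 ha1 hb0 hb1.
Qed.

Lemma reached_next_scale (N N' : int) v vs : M <= N -> N <= N' <= N + 1 ->
  vcross N (N + 1) (3 * N) v vs -> reached v vs ->
  forall v' vs', vcross N' (N' + 1) (3 * N') v' vs' -> reached v' vs'.
Proof.
move=> HN NN' Hv Rv v' vs' Hv'.
have [h [hs Hh]] := hcross_exists (N := N') (b0 := N' + 1) (b1 := 3 * N') ltac:(lia)
  ltac:(lia) ltac:(lia) ltac:(lia).
have Rh := reached_hcross Hv Rv Hh ltac:(lia) ltac:(lia) ltac:(lia) ltac:(lia).
exact: reached_vcross Hh Rh Hv' ltac:(lia) ltac:(lia) ltac:(lia) ltac:(lia).
Qed.

Lemma reached_right (N : int) v vs : M <= N -> vcross N (N + 1) (3 * N) v vs -> reached v vs.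
Proof.
move=> HN; have [k ->] : exists k : nat, N = M + k%:Z by exists (absz (N - M)); lia.
elim: k v vs {HN} => [|k IH] v vs Hv.
  by apply: reached_next_scale anchor reached_anchor _ _ Hv; lia.
have [u [us Hu]] := vcross_exists (N := M + k%:Z) (a0 := M + k%:Z + 1) (a1 := 3 * (M + k%:Z))
  ltac:(lia) ltac:(lia) ltac:(lia) ltac:(lia).
by apply: reached_next_scale Hu (IH _ _ Hu) _ _ Hv; lia.
Qed.

Lemma reached_top (N : int) h hs : M <= N -> hcross N (N + 1) (3 * N) h hs -> reached h hs.
Proof.
move=> HN Hh.
have [v [vs Hv]] := vcross_exists (N := N) (a0 := N + 1) (a1 := 3 * N) HN
  ltac:(lia) ltac:(lia) ltac:(lia).
exact: reached_hcross Hv (reached_right HN Hv) Hh ltac:(lia) ltac:(lia) ltac:(lia) ltac:(lia).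
Qed.

Lemma reached_left (N : int) v vs : M <= N -> vcross N (- (3 * N)) (- N - 1) v vs -> reached v vs.
Proof.
move=> HN Hv.
have [h [hs Hh]] := hcross_exists (N := N) (b0 := N + 1) (b1 := 3 * N) HN
  ltac:(lia) ltac:(lia) ltac:(lia).
exact: reached_vcross Hh (reached_top HN Hh) Hv ltac:(lia) ltac:(lia) ltac:(lia) ltac:(lia).
Qed.

Lemma reached_bottom (N : int) h hs : M <= N -> hcross N (- (3 * N)) (- N - 1) h hs -> reached h hs.
Proof.
move=> HN Hh.
have [v [vs Hv]] := vcross_exists (N := N) (a0 := N + 1) (a1 := 3 * N) HN
  ltac:(lia) ltac:(lia) ltac:(lia).
exact: reached_hcross Hv (reached_right HN Hv) Hh ltac:(lia) ltac:(lia) ltac:(lia) ltac:(lia).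
Qed.

Lemma king_exit_reached (N : int) x p : M <= N -> path adj_king x p -> inbox N x ->
  ~~ inbox (3 * N) (last x p) -> exists2 c, c \in x :: p & connected_in adj_sq (~` A) v0 c.
Proof.
move=> HN Hp Hx Hl.
have Hx3 : inbox (3 * N) x by apply: inbox_le Hx; lia.
have [q [Hq Hlq sub box]] := king_path_exit_box Hp Hx3 Hl.
have through v vs : reached v vs -> (exists2 c, c \in x :: q & c \in v :: vs) ->
    exists2 c, c \in x :: p & connected_in adj_sq (~` A) v0 c.
  by move=> Rv [c cq cv]; exists c; [exact: sub | exact: Rv].
have [Hx1 Hx2] : `|x.1| <= N /\ `|x.2| <= N by move: Hx => /andP[].
have rows : {in x :: q, forall c : Z2, `|c.2| < 5 * N} by move=> c /box /andP[_]; lia.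
have cols : {in x :: q, forall c : Z2, `|c.1| < 5 * N} by move=> c /box /andP[]; lia.
have [R|[L|[T|B]]] : 3 * N < (last x q).1 \/ (last x q).1 < - (3 * N) \/
    3 * N < (last x q).2 \/ (last x q).2 < - (3 * N) by move: Hlq; rewrite /inbox; lia.
- have [v [vs Hv]] := vcross_exists (N := N) (a0 := N + 1) (a1 := 3 * N) HN
    ltac:(lia) ltac:(lia) ltac:(lia).
  by apply: through (reached_right HN Hv) (king_meets_vcross Hq rows _ Hv); left; lia.
- have [v [vs Hv]] := vcross_exists (N := N) (a0 := - (3 * N)) (a1 := - N - 1) HN
    ltac:(lia) ltac:(lia) ltac:(lia).
  by apply: through (reached_left HN Hv) (king_meets_vcross Hq rows _ Hv); right; lia.
- have [h [hs Hh]] := hcross_exists (N := N) (b0 := N + 1) (b1 := 3 * N) HN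
    ltac:(lia) ltac:(lia) ltac:(lia).
  by apply: through (reached_top HN Hh) (king_meets_hcross Hq cols _ Hh); left; lia.
- have [h [hs Hh]] := hcross_exists (N := N) (b0 := - (3 * N)) (b1 := - N - 1) HN
    ltac:(lia) ltac:(lia) ltac:(lia).
  by apply: through (reached_bottom HN Hh) (king_meets_hcross Hq cols _ Hh); right; lia.
Qed.

Lemma reached_of_far (N : int) x w : M <= N -> inbox N x ->
  connected_in adj_sq (~` A) x w -> ~~ inbox (3 * N) w -> connected_in adj_sq (~` A) v0 x.
Proof.
move=> HN Hx [p [Hp <- Op]] Hw.
have [c Hc Rc] := king_exit_reached HN (sub_path adj_sq_king Hp) Hx Hw.
exact: connected_in_trans Rc (connected_in_path2 adj_sq_sym Hp Op Hc (mem_head _ _)).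
Qed.

Lemma unreached_bounded (N : int) x w : M <= N -> inbox N x ->
  connected_in adj_king [set c | ~ connected_in adj_sq (~` A) v0 c] x w -> inbox (3 * N) w.
Proof.
move=> HN Hx [p [Hp <- Up]]; apply: contraT => Hw.
by have [c /Up] := king_exit_reached HN Hp Hx Hw.
Qed.

Lemma reached_unbounded (K : int) : exists2 c, connected_in adj_sq (~` A) v0 c & K < c.1.
Proof.
have HN : M <= Num.max M K by lia.
have [v [vs Hv]] := vcross_exists (N := Num.max M K) (a0 := Num.max M K + 1)
  (a1 := 3 * Num.max M K) HN ltac:(lia) ltac:(lia) ltac:(lia).
exists v; first exact: (reached_right HN Hv) v (mem_head _ _).
by case: Hv => _ _ _ /(_ v (mem_head _ _))[]; lia.
Qed.

End Cluster.

Theorem closed_paths_short_unique_cluster (A : set Z2) (M : int) :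
  2 <= M -> closed_paths_short M A ->
  exists I : set Z2,
    [/\ component adj_sq (~` A) I, infinite_set I,
        (forall J, component adj_sq (~` A) J -> infinite_set J -> J = I) &
        (forall K, component adj_king (~` I) K -> finite_set K)].
Proof.
move=> hM hA.
have [v0 [vs0 anchor]] := vcross_exists hM hA (N := M) (a0 := M + 1) (a1 := 3 * M)
  (lexx M) ltac:(lia) ltac:(lia) ltac:(lia).
set I := [set y | connected_in adj_sq (~` A) v0 y].
have box_around (x : Z2) : exists2 N : int, M <= N & inbox N x.
  by exists (Num.max M (Num.max `|x.1| `|x.2|)); rewrite /inbox; lia.
exists I; split.
- by exists v0; split => //; case: anchor => _ _ _ /(_ v0 (mem_head _ _))[].
- exact/infinite_set_unbounded/(reached_unbounded hM hA anchor).
- move=> J [x [Ox ->]] /(infinite_set_outside_box (3 * _)) far.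
  have [N HN Hx] := box_around x; have [y Jy Hy] := far N.
  have Ix := reached_of_far hM hA anchor HN Hx Jy Hy.
  apply/seteqP; split => z Hz; first exact: connected_in_trans Ix Hz.
  exact: connected_in_trans (connected_in_sym adj_sq_sym Ix) Hz.
- move=> K [x [_ ->]]; apply: contrapT => /(infinite_set_outside_box (3 * _)) far.
  have [N HN Hx] := box_around x; have [y Ky] := far N.
  by rewrite (unreached_bounded hM hA anchor HN Hx Ky).
Qed.

(** * Counting closed king paths *)

Definition king_nbrs (a : Z2) : seq Z2 :=
  [seq (a.1 + d.1, a.2 + d.2) | d : Z2 <-
    [:: (1, 0); (-1, 0); (0, 1); (0, -1); (1, 1); (1, -1); (-1, 1); (-1, -1)]].

Lemma king_nbrsP a b : adj_king a b -> b \in king_nbrs a.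
Proof. by case: a b => [a1 a2] [b1 b2]; rewrite /adj_king /king_nbrs /= !inE !xpair_eqE; lia. Qed.

Lemma sumn_map_const (T : Type) (s : seq T) (c : nat) : sumn [seq c | _ <- s] = (c * size s)%N.
Proof. by elim: s => [|_ s /= ->]; rewrite ?muln0 ?mulnS. Qed.

Fixpoint king_walks (a : Z2) (n : nat) : seq (seq Z2) :=
  if n is n'.+1 then flatten [seq [seq b :: p | p <- king_walks b n'] | b <- king_nbrs a]
  else [:: [::]].

Lemma size_king_walks a n : size (king_walks a n) = (8 ^ n)%N.
Proof.
elim: n a => [|n IH] a //.
rewrite -[king_walks a n.+1]/(flatten _) size_flatten /shape -map_comp.
rewrite (eq_map (_ : _ =1 fun => 8 ^ n)%N) => [|b]; last by rewrite /= size_map IH.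
by rewrite sumn_map_const expnS mulnC.
Qed.

Lemma king_walks_complete a p : path adj_king a p -> p \in king_walks a (size p).
Proof.
elim: p a => [|b p IH] a; first by rewrite inE.
move=> /andP[Hab Hp]; rewrite -[king_walks a _]/(flatten _).
apply/flatten_mapP; exists b; first exact: king_nbrsP.
exact/map_f/IH.
Qed.

Lemma size_mem_king_walks a n p : p \in king_walks a n -> size p = n.
Proof.
elim: n a p => [|n IH] a p; first by rewrite inE => /eqP ->.
rewrite -[king_walks a _]/(flatten _).
by move/flatten_mapP => [b _ /mapP[q /IH Hq ->]] /=; rewrite Hq.
Qed.

Lemma size_box_cells (K : nat) : size (box_cells K%:Z) = ((2 * K).+1 ^ 2)%N.
Proof. by rewrite size_allpairs size_irange expnS expn1; congr (_ * _)%N; lia. Qed.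

Definition box_saws (K k : nat) : seq (seq Z2) :=
  [seq s <- flatten [seq [seq a :: p | p <- king_walks a k] | a <- box_cells K%:Z] | uniq s].

Lemma size_box_saws K k : (size (box_saws K k) <= (2 * K).+1 ^ 2 * 8 ^ k)%N.
Proof.
rewrite size_filter (leq_trans (count_size _ _)) // size_flatten /shape -map_comp.
rewrite (eq_map (_ : _ =1 fun => 8 ^ k)%N) => [|a]; last by rewrite /= size_map size_king_walks.
by rewrite sumn_map_const size_box_cells mulnC.
Qed.

Lemma mem_box_saws K k s : s \in box_saws K k -> uniq s /\ size s = k.+1.
Proof.
rewrite mem_filter => /andP[Hu /flatten_mapP[a _ /mapP[p /size_mem_king_walks Hp Es]]].
by rewrite Es in Hu *; split => //=; rewrite Hp.
Qed.

Lemma box_saws_complete (K : nat) a p : path adj_king a p -> uniq (a :: p) ->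
  inbox K%:Z a -> a :: p \in box_saws K (size p).
Proof.
move=> Hp Hu Ha; rewrite mem_filter Hu /=.
by apply/flatten_mapP; exists a; [exact: box_cellsP | exact/map_f/king_walks_complete].
Qed.

Lemma saw_count_bound n : ((2 * (5 * n.+1)).+1 ^ 2 * 8 ^ (2 * n).+1 <= 968 * 256 ^ n)%N.
Proof.
have sq_le : (n.+1 ^ 2 <= 4 ^ n)%N.
  by elim: n => // n IH; move: IH; rewrite !expnS !expn0; nia.
have -> : (256 ^ n = 4 ^ n * 64 ^ n)%N by rewrite -expnMn.
have -> : (8 ^ (2 * n).+1 = 8 * 64 ^ n)%N by rewrite expnS expnM.
have : ((2 * (5 * n.+1)).+1 ^ 2 <= 121 * n.+1 ^ 2)%N by rewrite !expnS !expn0; nia.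
by nia.
Qed.

(** * The Peierls estimate *)

Section Peierls.
Context (R : realType) (d : measure_display) (T : measurableType d)
  (P : probability T R) (B : T -> set Z2) (eps : R).
Hypotheses (mB : forall z : Z2, measurable [set w | B w z]) (hB : rare P B eps).

Definition all_closed (s : seq Z2) : set T := [set w | {in s, forall c : Z2, B w c}].

Definition some_closed (L : seq (seq Z2)) : set T := [set w | exists2 s, s \in L & all_closed s w].

Lemma measurable_all_closed s : measurable (all_closed s).
Proof.
elim: s => [|c s IH].
  by rewrite (_ : all_closed [::] = setT) //; apply/seteqP; split => w //= _ c.
rewrite (_ : all_closed _ = [set w | B w c] `&` all_closed s); first exact: measurableI.
apply/seteqP; split => w /=.
  by move=> H; split => [|e He]; apply: H; rewrite inE ?eqxx ?He ?orbT.
by move=> [H1 H2] e; rewrite inE => /predU1P[->|/H2].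
Qed.

Lemma some_closed_cons s L : some_closed (s :: L) = all_closed s `|` some_closed L.
Proof.
apply/seteqP; split => w /=.
  by move=> [t]; rewrite inE => /predU1P[->|Ht] Hw; [left | right; exists t].
by move=> [Hw|[t Ht Hw]]; [exists s; rewrite ?mem_head | exists t; rewrite // inE Ht orbT].
Qed.

Lemma some_closed_nil : some_closed [::] = set0.
Proof. by apply/seteqP; split => w //= []. Qed.

Lemma measurable_some_closed L : measurable (some_closed L).
Proof.
elim: L => [|s L IH]; first by rewrite some_closed_nil.
by rewrite some_closed_cons; apply: measurableU => //; exact: measurable_all_closed.
Qed.

Lemma some_closed_le L x : (forall s, s \in L -> (P (all_closed s) <= x%:E)%E) ->
  (P (some_closed L) <= ((size L)%:R * x)%:E)%E.
Proof.
elim: L => [|s L IH] HL; first by rewrite some_closed_nil measure0 mul0r.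
rewrite some_closed_cons (le_trans (measureU2 _ (measurable_all_closed s) (measurable_some_closed L))) //.
rewrite /= mulrSr mulrDl mul1r EFinD (addeC ((size L)%:R * x)%:E) leeD //.
  by apply: HL; rewrite mem_head.
by apply: IH => t Ht; apply: HL; rewrite inE Ht orbT.
Qed.

Lemma all_closed_le s : uniq s -> (P (all_closed s) <= (eps ^+ size s)%:E)%E.
Proof.
move=> Hu; have := hB.2 [fset c in s]%fset.
rewrite card_fseq undup_id // (_ : [set w | _] = all_closed s) //.
by apply/seteqP; split => w /= H c Hc; apply: H; rewrite ?inE in Hc *.
Qed.

(* At scale N = n + 1: some closed self-avoiding king path with 2N sites starts
   in the box of radius 5N. *)
Definition long_closed_path (n : nat) : set T := some_closed (box_saws (5 * n.+1) (2 * n).+1).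

Lemma long_closed_path_le n : eps <= 1 ->
  (P (long_closed_path n) <= (968 * (256 * eps ^+ 2) ^+ n)%:E)%E.
Proof.
move=> eps1; have eps0 := hB.1.
rewrite (le_trans (some_closed_le (x := eps ^+ (2 * n).+2) _)) //.
  by move=> s /mem_box_saws[Hu <-]; apply: all_closed_le.
rewrite lee_fin (@le_trans _ _ ((968 * 256 ^ n)%N%:R * (eps ^+ 2) ^+ n)) //; last first.
  by rewrite natrM natrX [in X in _ <= X]exprMn mulrA.
apply: ler_pM; rewrite ?exprn_ge0 ?ler_nat //.
  exact: leq_trans (size_box_saws _ _) (saw_count_bound n).
by rewrite -exprM -addn2 exprD ler_piMr ?exprn_ge0 ?exprn_ile1.
Qed.

Lemma nneseries_long_closed_path_fin : eps < 1 / 21 ->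
  (\sum_(n <oo) P (long_closed_path n) < +oo)%E.
Proof.
move=> heps; have eps0 := hB.1.
have q1 : `|256 * eps ^+ 2| < 1.
  have h : eps * eps <= eps * (1 / 21) by rewrite ler_wpM2l // ltW.
  by rewrite ger0_norm ?mulr_ge0 ?exprn_ge0 // expr2; lra.
apply: (@le_lt_trans _ _ (\sum_(n <oo) ((968 * (256 * eps ^+ 2) ^+ n)%:E))%E).
  apply: lee_nneseries => [n _ _|n _]; first exact: measure_ge0.
  by apply: long_closed_path_le; lra.
have -> : (fun m => \sum_(0 <= i < m) ((968 * (256 * eps ^+ 2) ^+ i)%:E)%E) =
    EFin \o series (geometric 968 (256 * eps ^+ 2)).
  by apply/funext => m /=; rewrite sumEFin.
by rewrite EFin_lim ?ltry //; apply: is_cvg_geometric_series.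
Qed.

Lemma closed_paths_short_eventually w (m : nat) :
  (forall n, (m <= n)%N -> ~ long_closed_path n w) -> closed_paths_short (m + 2)%:Z (B w).
Proof.
move=> Hm N HN a p Hp Hu Hc Ha1 Ha2; rewrite ltNge; apply/negP => long.
have [n EN] : exists n : nat, N = n.+1%:Z by exists (absz N).-1; lia.
subst N.
apply: (Hm n); first by lia.
exists (a :: take (2 * n).+1 p); last first.
  by move=> c Hc'; apply: Hc; rewrite !inE in Hc' *; case/orP: Hc' => [->|/mem_take ->]; rewrite ?orbT.
have sz : size (take (2 * n).+1 p) = (2 * n).+1 by rewrite size_takel //; lia.
rewrite -[X in box_saws _ X]sz; apply: box_saws_complete.
- exact: take_path.
- exact: take_uniq (2 * n).+2 Hu.
- by rewrite /inbox; lia.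
Qed.

Lemma ae_closed_paths_short : eps < 1 / 21 ->
  {ae P, forall w, exists2 M : int, 2 <= M & closed_paths_short M (B w)}.
Proof.
move=> heps.
have mE n : measurable (long_closed_path n) by exact: measurable_some_closed.
exists (lim_sup_set long_closed_path); split.
- by apply: bigcap_measurable => // k _; apply: bigcup_measurable => j _.
- exact: lim_sup_set_cvg0 mE (nneseries_long_closed_path_fin heps).
move=> w /= Hw; apply: contrapT => Hlim; apply: Hw.
have [m Hm] : exists m, forall n, (m <= n)%N -> ~ long_closed_path n w.
  apply: contrapT => Hc; apply: Hlim => k _; apply: contrapT => Hk.
  by apply: Hc; exists k => j Hj Hf; apply: Hk; exists j.
by exists (m + 2)%:Z; [lia | exact: closed_paths_short_eventually].
Qed.

End Peierls.

Theorem lemma6p2 (R : realType) (d : measure_display) (T : measurableType d)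
  (P : probability T R) (B : T -> set Z2) (eps : R) :
  (forall z : Z2, measurable [set w | B w z]) ->
  rare P B eps ->
  eps < 1 / 21 ->
  {ae P, forall w,
    exists I : set Z2,
      [/\ component adj_sq (~` B w) I,
          infinite_set I,
          (forall J, component adj_sq (~` B w) J -> infinite_set J -> J = I) &
          (forall K, component adj_king (~` I) K -> finite_set K)]}.
Proof.
move=> mB hB heps; apply: filterS (ae_closed_paths_short mB hB heps) => w [M hM hA].
exact: closed_paths_short_unique_cluster hM hA.
Qed.
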